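(* For every recognizable language $L$, the minimal compact automaton $\mathcal A_c(L)$ is obtained, up to isomorphism, from the minimal deterministic automaton $\mathcal A(L)$ (viewed as a compact automaton with edges labelled by letters) by a finite sequence of elementary reductions.
   Context: A compact automaton $(Q,E,I,T)$ has edges $E\subseteq Q\times A^+\times Q$, initial states $I$ and terminal states $T$. It is deterministic if $|I|=1$ and the labels of the edges leaving any state begin with pairwise distinct letters. It is trim if every state lies on a path from $I$ to $T$. A state is special if it is initial or terminal, or if it has two outgoing edges whose labels begin with distinct letters. Elementary reduction: let $\mathcal A=(Q,i,T)$ be a trim deterministic compact automaton and let $q$ be a non-special state. Then $q$ has a unique outgoing edge $q\xrightarrow{v}r$, with $r\ne q$, and $q\neq i$. The elementary reduction of $\mathcal A$ at $q$ is the compact automaton with states $Q\setminus\{q\}$, initial state $i$, terminal states $T$, and edges: (i) the edges $(p,w,r')$ of $\mathcal A$ with $p,r'\neq q$; (ii) the edges $(p,uv,r)$ for every edge $(p,u,q)$ of $\mathcal A$. $\mathcal A(L)$ is the minimal deterministic automaton of $L$, whose states are the nonempty residuals $u^{-1}L=\{v\mid uv\in L\}$. $\mathcal A_c(L)$ is defined as follows: - its states are the special residuals of $L$, i.e. nonempty residuals $u^{-1}L$ such that $u=1$, or $u\in L$, or $u^{-1}L$ contains two words beginning with different letters; - its initial state is $L$; - its terminal states are the $u^{-1}L$ with $u\in L$; - its edges are the $(u^{-1}L,v,(uv)^{-1}L)$ with $v$ nonempty, where both residuals are special and no factorization $v=v'v''$ with $v',v''$ nonempty has $(uv')^{-1}L$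 special. *)

From mathcomp Require Import all_boot.

Set Implicit Arguments.
Unset Strict Implicit.
Unset Printing Implicit Defensive.

Section CompactAutomata.

Variable A : finType.

Definition lang := seq A -> bool.

Definition residual (u : seq A) (L : lang) : lang := fun v => L (u ++ v).

Definition recognizable (L : lang) : Prop :=
  exists (Q : finType) (d : Q -> A -> Q) (q0 : Q) (F : pred Q),
    forall w, L w = F (foldl d q0 w).

Record cauto (S : Type) := CAuto {
  cstate : S -> Prop;
  cedge  : S -> seq A -> S -> Prop;
  cinit  : S -> Prop;
  cterm  : S -> Prop }.

Section OnAutomata.
Variable S : Type.
Implicit Types (X Y Z : cauto S) (p q r : S).

Definition cauto_wf X : Prop :=
  (forall p w r, cedge X p w r -> [/\ cstate X p, cstate X r & w <> [::]]) /\
  (forall p, cinit X p -> cstate X p) /\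
  (forall p, cterm X p -> cstate X p).

Definition deterministic X : Prop :=
  (exists i, forall p, cinit X p <-> p = i) /\
  (forall p w1 r1 w2 r2, cedge X p w1 r1 -> cedge X p w2 r2 ->
     ohead w1 = ohead w2 -> w1 = w2 /\ r1 = r2).

Inductive reach X : S -> S -> Prop :=
  | reach_refl p : reach X p p
  | reach_step p w q r : cedge X p w q -> reach X q r -> reach X p r.

Definition trim X : Prop :=
  forall q, cstate X q ->
    (exists i, cinit X i /\ reach X i q) /\ (exists t, cterm X t /\ reach X q t).

Definition special X q : Prop :=
  cinit X q \/ cterm X q \/
  exists w1 r1 w2 r2, cedge X q w1 r1 /\ cedge X q w2 r2 /\ ohead w1 <> ohead w2.

(* Y is the elementary reduction of X at the non-special state q, whose
   unique outgoing edge is q --v--> r. *)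
Definition elem_reduction X q v r Y : Prop :=
  cauto_wf X /\ deterministic X /\ trim X /\
  cstate X q /\ ~ special X q /\ cedge X q v r /\
  (forall p, cstate Y p <-> cstate X p /\ p <> q) /\
  (forall p w r', cedge Y p w r' <->
      (cedge X p w r' /\ p <> q /\ r' <> q) \/
      (exists u, cedge X p u q /\ w = u ++ v /\ r' = r)) /\
  (forall p, cinit Y p <-> cinit X p) /\
  (forall p, cterm Y p <-> cterm X p).

Definition elem_red X Y : Prop := exists q v r, elem_reduction X q v r Y.

Inductive reduces : cauto S -> cauto S -> Prop :=
  | reduces_refl X : reduces X X
  | reduces_step X Y Z : elem_red X Y -> reduces Y Z -> reduces X Z.

End OnAutomata.

Definition cauto_iso (S1 S2 : Type) (X : cauto S1) (Y : cauto S2) : Prop :=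
  exists f : S1 -> S2,
    (forall p, cstate X p -> cstate Y (f p)) /\
    (forall p p', cstate X p -> cstate X p' -> f p = f p' -> p = p') /\
    (forall q, cstate Y q -> exists p, cstate X p /\ f p = q) /\
    (forall p w r, cstate X p -> cstate X r ->
        (cedge X p w r <-> cedge Y (f p) w (f r))) /\
    (forall p, cstate X p -> (cinit X p <-> cinit Y (f p))) /\
    (forall p, cstate X p -> (cterm X p <-> cterm Y (f p))).

Section Minimal.
Variable L : lang.

Definition nonempty_lang (K : lang) : Prop := exists v, K v.

Definition is_residual_state (K : lang) : Prop :=
  (exists u, K = residual u L) /\ nonempty_lang K.

Definition minDFA : cauto lang := {|
  cstate := is_residual_state;
  cedge := fun K w K' => exists u a, w = [:: a] /\
              K = residual u L /\ K' = residual (rcons u a) L /\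
              nonempty_lang K /\ nonempty_lang K';
  cinit := fun K => is_residual_state K /\ K = L;
  cterm := fun K => exists u, L u /\ K = residual u L |}.

Definition special_residual (K : lang) : Prop :=
  nonempty_lang K /\
  exists u, K = residual u L /\
    (u = [::] \/ L u \/
     exists (a b : A) (w1 w2 : seq A), a <> b /\ K (a :: w1) /\ K (b :: w2)).

Definition Ac : cauto lang := {|
  cstate := special_residual;
  cedge := fun K v K' => exists u, K = residual u L /\ K' = residual (u ++ v) L /\
              v <> [::] /\ special_residual K /\ special_residual K' /\
              (forall v' v'', v = v' ++ v'' -> v' <> [::] -> v'' <> [::] ->
                 ~ special_residual (residual (u ++ v') L));
  cinit := fun K => special_residual K /\ K = L;
  cterm := fun K => exists u, L u /\ K = residual u L |}.

End Minimal.

End CompactAutomata.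

From mathcomp Require Import all_boot.
From mathcomp Require Import zify.
From Stdlib Require Import Classical FunctionalExtensionality PropExtensionality.

(* For a set S of nonempty residuals of L containing all special ones, let
   [reduct L S] be the compact automaton on S whose edges K --w--> w^{-1}K
   read w up to the first return to S.  For S = all residuals this is A(L),
   for S = the special residuals it is A_c(L).  Removing a non-special q from
   S is an elementary reduction: a non-special residual has a single outgoing
   edge q --v--> r, and the edges entering q are exactly those that get
   extended by v.  As L has finitely many residuals, finitely many deletions
   lead from A(L) to A_c(L). *)

Set Implicit Arguments.
Unset Strict Implicit.
Unset Printing Implicit Defensive.

Lemma eq_cat_cases (T : Type) (x x' u v : seq T) : x ++ x' = u ++ v ->
  (exists y, x = u ++ y /\ v = y ++ x') \/ (exists y, u = x ++ y /\ x' = y ++ v).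
Proof.
elim: x u => [|a x IH] [|b u] /=.
- by move=> ->; right; exists [::].
- by move=> ->; right; exists (b :: u).
- by move=> <-; left; exists (a :: x).
- by case=> -> /IH [[y [-> ->]]|[y [-> ->]]]; [left|right]; exists y.
Qed.

Lemma neq_common_prefix (T : eqType) (w1 w2 : seq T) : w1 <> w2 ->
  exists c x1 x2, w1 = c ++ x1 /\ w2 = c ++ x2 /\
   (x1 = [::] \/ x2 = [::] \/
    exists b1 b2 y1 y2, x1 = b1 :: y1 /\ x2 = b2 :: y2 /\ b1 <> b2).
Proof.
elim: w1 w2 => [|a w1 IH] [|b w2] neq //.
- by exists [::], [::], (b :: w2); do 2 split => //; left.
- by exists [::], (a :: w1), [::]; do 2 split => //; right; left.
- case: (eqVneq a b) neq => [<-|ab] neq.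
    have neq' : w1 <> w2 by move=> E; apply: neq; rewrite E.
    have [c [x1 [x2 [-> [-> split_c]]]]] := IH _ neq'.
    by exists (a :: c), x1, x2.
  exists [::], (a :: w1), (b :: w2); do 2 split => //; right; right.
  by exists a, b, w1, w2; do 2 split => //; apply/eqP.
Qed.

Lemma shortest_prefix (T : Type) (P : seq T -> Prop) (w : seq T) : w <> [::] -> P w ->
  exists w1 w2, w = w1 ++ w2 /\ w1 <> [::] /\ P w1 /\
   (forall v1 v2, w1 = v1 ++ v2 -> v1 <> [::] -> v2 <> [::] -> ~ P v1).
Proof.
have [n size_w] : exists n, size w <= n by exists (size w).
elim: n w size_w => [|n IH] w size_w w_nil Pw.
  by case: w size_w w_nil Pw.
case: (classic (exists v1 v2, w = v1 ++ v2 /\ v1 <> [::] /\ v2 <> [::] /\ P v1)).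
- case=> v1 [v2 [Ew [v1_nil [v2_nil Pv1]]]].
  have size_v1 : size v1 <= n.
    by move: size_w; rewrite Ew size_cat; case: v2 v2_nil {Ew} => // ? ? _ /=; lia.
  have [w1 [w2 [Ev1 min_w1]]] := IH v1 size_v1 v1_nil Pv1.
  by exists w1, (w2 ++ v2); rewrite Ew Ev1 catA.
- move=> no_prefix; exists w, [::]; rewrite cats0; do 3 split => //.
  by move=> v1 v2 Ew v1_nil v2_nil Pv1; apply: no_prefix; exists v1, v2.
Qed.

Section Residuals.
Variable A : finType.
Implicit Types (K L : lang A) (u v w : seq A).

Lemma residual_cat u v K : residual (u ++ v) K = residual v (residual u K).
Proof. by apply: functional_extensionality => x; rewrite /residual catA. Qed.

Lemma residual_nil K : residual [::] K = K.
Proof. by apply: functional_extensionality. Qed.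

Lemma residual_state_residual L K w : is_residual_state L K ->
  nonempty_lang (residual w K) -> is_residual_state L (residual w K).
Proof. by case=> [[u ->] _] ne; split => //; exists (u ++ w); rewrite residual_cat. Qed.

Lemma special_residual_state L K : special_residual L K -> is_residual_state L K.
Proof. by case=> ne [u [EK _]]; split => //; exists u. Qed.

Lemma special_residual_term L u : L u -> special_residual L (residual u L).
Proof.
move=> Lu; split; first by exists [::]; rewrite /residual cats0.
by exists u; split => //; right; left.
Qed.

Lemma special_residual_self L K : is_residual_state L K -> special_residual L L.
Proof.
case=> [[u ->] [v Kv]]; split; first by exists (u ++ v).
by exists [::]; rewrite residual_nil; split => //; left.
Qed.

Lemma special_residual_branch L K a b w1 w2 : is_residual_state L K ->
  a <> b -> K (a :: w1) -> K (b :: w2) -> special_residual L K.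
Proof.
by case=> [[u ->] ne] ab Ka Kb; split => //; exists u; split => //; right; right;
  exists a, b, w1, w2.
Qed.

End Residuals.

Section Reduct.
Variables (A : finType) (L : lang A).
Implicit Types (S : lang A -> Prop) (K p q r : lang A) (u v w : seq A).

Definition avoids S K w := forall w1 w2, w = w1 ++ w2 -> w1 <> [::] -> w2 <> [::] ->
  ~ S (residual w1 K).

Definition reduct S : cauto A (lang A) := {|
  cstate := S;
  cedge := fun K w K' => [/\ S K, S K', w <> [::], K' = residual w K & avoids S K w];
  cinit := fun K => S K /\ K = L;
  cterm := fun K => exists u, L u /\ K = residual u L |}.

Lemma avoids_sub S1 S2 K w : (forall K', S1 K' -> S2 K') -> avoids S2 K w -> avoids S1 K w.
Proof. by move=> S12 av w1 w2 Ew w1_nil w2_nil /S12; apply: (av w1 w2). Qed.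

Lemma pred_lang_ext (P Q : lang A -> Prop) : (forall K, P K <-> Q K) -> P = Q.
Proof.
by move=> PQ; apply: functional_extensionality => K; apply: propositional_extensionality.
Qed.

Lemma eq_CAuto_edges (s i t : lang A -> Prop) (E1 E2 : lang A -> seq A -> lang A -> Prop) :
  (forall K w K', E1 K w K' <-> E2 K w K') -> CAuto s E1 i t = CAuto s E2 i t.
Proof.
move=> E12; congr CAuto; apply: functional_extensionality => K.
apply: functional_extensionality => w; apply: functional_extensionality => K'.
exact: propositional_extensionality.
Qed.

Lemma minDFA_reduct : minDFA L = reduct (is_residual_state L).
Proof.
apply: eq_CAuto_edges => K w K'; split.
- case=> u [a [-> [-> [-> [neK neK']]]]].
  split => //; first by split => //; exists u.
  + by split => //; exists (rcons u a).
  + by rewrite -cats1 residual_cat.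
  + move=> [|? w1] [|? w2] // /(congr1 size); rewrite size_cat /=; lia.
- case=> K_res K'_res w_nil EK' av; case: w w_nil EK' av => [//|a t] _ EK' av.
  have t_nil : t = [::].
    apply: NNPP => t_nil; apply: (av [:: a] t erefl) => //.
    apply: residual_state_residual => //.
    by case: K'_res => _ [x Kx]; exists (t ++ x); rewrite EK' in Kx.
  subst t; case: K_res K'_res => [[u EK] neK] [_ neK']; exists u, a.
  by do 2 split => //; split; [rewrite EK' EK -cats1 residual_cat | split].
Qed.

Lemma Ac_reduct : Ac L = reduct (special_residual L).
Proof.
apply: eq_CAuto_edges => K w K'; split.
- case=> u [-> [-> [w_nil [spK [spK' av]]]]]; split => //; first by rewrite residual_cat.
  by move=> w1 w2 Ew w1_nil w2_nil; rewrite -residual_cat; exact: (av w1 w2).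
- case=> spK spK' w_nil EK' av; case: (spK) => _ [u [EK _]]; subst K K'.
  exists u; rewrite residual_cat; do 5 split => //.
  by move=> w1 w2 Ew w1_nil w2_nil; rewrite residual_cat; exact: (av w1 w2).
Qed.

Section Deletion.
Variable S : lang A -> Prop.
Hypothesis special_S : forall K, special_residual L K -> S K.
Hypothesis S_residual : forall K, S K -> is_residual_state L K.

Local Notation R := (reduct S).

Lemma reduct_wf : cauto_wf R.
Proof.
split; first by move=> p w r [].
by split=> [p []|p [u [Lu ->]]] //; apply/special_S/special_residual_term.
Qed.

Lemma reduct_shortest_edge p w : S p -> w <> [::] -> S (residual w p) ->
  exists w1 w2, w = w1 ++ w2 /\ cedge R p w1 (residual w1 p).
Proof.
move=> Sp w_nil Sw.
have [w1 [w2 [Ew [w1_nil [Sw1 av]]]]] :=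
  shortest_prefix (P := fun x => S (residual x p)) w_nil Sw.
by exists w1, w2.
Qed.

Lemma reduct_edges_branch p c b1 b2 y1 y2 r1 r2 :
  cedge R p (c ++ b1 :: y1) r1 -> cedge R p (c ++ b2 :: y2) r2 -> b1 <> b2 ->
  special_residual L (residual c p).
Proof.
case=> Sp Sr1 _ E1 _ [_ Sr2 _ E2 _] b12.
have [[_ [x Hx]] [_ [x' Hx']]] := (S_residual Sr1, S_residual Sr2).
rewrite E1 /residual -catA in Hx; rewrite E2 /residual -catA in Hx'.
apply: (@special_residual_branch _ L _ b1 b2 (y1 ++ x) (y2 ++ x')) b12 _ _ => //.
by apply: residual_state_residual (S_residual Sp) _; exists (b1 :: y1 ++ x).
Qed.

Lemma reduct_edge_det p w1 r1 w2 r2 : cedge R p w1 r1 -> cedge R p w2 r2 ->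
  ohead w1 = ohead w2 -> w1 = w2 /\ r1 = r2.
Proof.
move=> e1 e2 eq_head; case: (e1) (e2) => _ Sr1 w1_nil E1 av1 [_ Sr2 w2_nil E2 av2].
case: (classic (w1 = w2)) => [Ew|neq]; first by rewrite E1 E2 Ew.
exfalso; have [c [x1 [x2 [Ew1 [Ew2 split_c]]]]] := neq_common_prefix neq.
subst w1 w2; have c_nil : c <> [::].
  move=> c0; subst c; move: split_c eq_head neq w1_nil w2_nil => /=.
  by case=> [->|[->|[b1 [b2 [y1 [y2 [-> [-> b12]]]]]]]] //= [].
case: split_c => [x1_nil|[x2_nil|[b1 [b2 [y1 [y2 [ex1 [ex2 b12]]]]]]]].
- subst x1; apply: (av2 c x2 erefl c_nil); first by move=> x0; apply: neq; rewrite x0.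
  by rewrite -(cats0 c) -E1.
- subst x2; apply: (av1 c x1 erefl c_nil); first by move=> x0; apply: neq; rewrite x0.
  by rewrite -(cats0 c) -E2.
- subst x1 x2; apply: (av1 c (b1 :: y1) erefl c_nil) => //.
  exact/special_S/(reduct_edges_branch e1 e2).
Qed.

Lemma reduct_det p0 : S p0 -> deterministic R.
Proof.
move=> Sp0; split; last exact: reduct_edge_det.
exists L => p /=; split=> [[]//|->]; split => //.
exact/special_S/special_residual_self/S_residual/Sp0.
Qed.

Lemma reduct_reach K w : S K -> S (residual w K) -> reach R K (residual w K).
Proof.
have [n size_w] : exists n, size w <= n by exists (size w).
elim: n w size_w K => [|n IH] w size_w K SK Sw.
  by case: w size_w Sw => // _ _; rewrite residual_nil; apply: reach_refl.
case: (classic (w = [::])) => [->|w_nil]; first by rewrite residual_nil; apply: reach_refl.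
have [w1 [w2 [Ew e]]] := reduct_shortest_edge SK w_nil Sw.
case: (e) => _ Sw1 w1_nil _ _; apply: reach_step e _; rewrite Ew residual_cat.
apply: IH => //; last by rewrite -residual_cat -Ew.
have w1_pos : 0 < size w1 by case: (w1) w1_nil.
by move: size_w; rewrite Ew size_cat; lia.
Qed.

Lemma reduct_trim : trim R.
Proof.
move=> K SK; have [[u EK] [x Kx]] := S_residual SK; split.
- have SL : S L by exact/special_S/special_residual_self/S_residual/SK.
  by exists L; split; [|rewrite EK; apply: reduct_reach; rewrite -?EK].
- have Lux : L (u ++ x) by move: Kx; rewrite EK.
  exists (residual x K); split; first by exists (u ++ x); rewrite EK residual_cat.
  by apply: reduct_reach => //; apply: special_S; rewrite EK -residual_cat;
    apply: special_residual_term.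
Qed.

Section NonSpecial.
Variable q : lang A.
Hypotheses (Sq : S q) (nsq : ~ special_residual L q).

Lemma reduct_nonspecial : ~ special R q.
Proof.
case=> [[_ Eq]|[[u [Lu Eq]]|[w1 [r1 [w2 [r2 [e1 [e2 heads]]]]]]]].
- by apply: nsq; rewrite Eq; apply: special_residual_self (S_residual Sq).
- by apply: nsq; rewrite Eq; apply: special_residual_term.
- case: w1 e1 heads => [[_ _ /(_ erefl) []]|a t1] e1.
  case: w2 e2 => [[_ _ /(_ erefl) []]|b t2] e2 ab; apply: nsq.
  rewrite -(residual_nil q); apply: (@reduct_edges_branch q [::] a b t1 t2 r1 r2 e1 e2).
  by move=> Eab; apply: ab; rewrite Eab.
Qed.

Lemma reduct_out_edge : exists v r, cedge R q v r.
Proof.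
have [[u Eq] [x qx]] := S_residual Sq.
have Sx : S (residual x q).
  apply: special_S; rewrite Eq -residual_cat; apply: special_residual_term.
  by rewrite Eq in qx.
have x_nil : x <> [::].
  move=> x0; subst x; apply: nsq; rewrite Eq; apply: special_residual_term.
  by move: qx; rewrite Eq /residual cats0.
by have [w1 [_ [_ e]]] := reduct_shortest_edge Sq x_nil Sx; exists w1, (residual w1 q).
Qed.

Lemma reduct_out_edge_uniq v r w r' : cedge R q v r -> cedge R q w r' -> w = v /\ r' = r.
Proof.
move=> e1 e2; case: (classic (ohead w = ohead v)) => heads.
  exact: reduct_edge_det e2 e1 heads.
by case: reduct_nonspecial; right; right; exists w, r', v, r.
Qed.

Lemma reduct_out_edge_noloop v r : cedge R q v r -> r <> q.
Proof.
move=> e rq; subst r.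
have stuck x t : reach R x t -> x = q -> t = q.
  elim=> // p w q' t' e' _ IH pq; subst p.
  by have [_ /IH] := reduct_out_edge_uniq e e'.
have [_ [t [[u [Lu ->]] /stuck tq]]] := reduct_trim Sq.
by apply: nsq; rewrite -tq //; apply: special_residual_term.
Qed.

Variables (v : seq A) (r : lang A).
Hypothesis out_q : cedge R q v r.

Local Notation S' := (fun K => S K /\ K <> q).
Local Notation R' := (reduct S').

Lemma reduct_del_edge p w r' : cedge R p w r' -> p <> q -> r' <> q -> cedge R' p w r'.
Proof. by case=> Sp Sr' w_nil Er' av pq r'q; split => //; apply: avoids_sub av => K []. Qed.

Lemma reduct_del_edge_cat p u : cedge R p u q -> cedge R' p (u ++ v) r.
Proof.
move=> e_in; have rq := reduct_out_edge_noloop out_q.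
have pq : p <> q.
  by move=> pq; subst p; have [_ Eq] := reduct_out_edge_uniq out_q e_in; apply: rq.
case: e_in out_q => Sp _ u_nil Equ avu [_ Sr v_nil Er avv].
split => //; first by case: (u) u_nil.
  by rewrite Er residual_cat -Equ.
move=> w1 w2 Ew w1_nil w2_nil [Sw1 w1q].
case: (eq_cat_cases (esym Ew)) => [[y [Ey Ev]]|[y [Eu Ew2]]].
- case: (classic (y = [::])) => [y0|y_nil].
    by apply: w1q; rewrite Ey y0 cats0 Equ.
  by apply: (avv y w2 Ev y_nil w2_nil); rewrite Equ -residual_cat -Ey.
- case: (classic (y = [::])) => [y0|y_nil].
    by apply: w1q; rewrite Equ Eu y0 cats0.
  exact: (avu w1 y Eu w1_nil y_nil).
Qed.

(* The first stop in S of a path p --w--> r' of R' is either r' itself or q;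
   in the latter case the path goes on along the only edge q --v--> r, and r
   already lies in S'. *)
Lemma reduct_edge_of_del_edge p w r' : cedge R' p w r' ->
  (cedge R p w r' /\ p <> q /\ r' <> q) \/
  (exists u, cedge R p u q /\ w = u ++ v /\ r' = r).
Proof.
case=> [[Sp pq] [Sr' r'q] w_nil Er' av].
have Sw : S (residual w p) by rewrite -Er'.
have [x1 [x2 [Ew e1]]] := reduct_shortest_edge Sp w_nil Sw.
case: (classic (residual x1 p = q)) => [Ex1|x1q]; last first.
  have x2_nil : x2 = [::].
    apply: NNPP => x2_nil; case: e1 => _ Sx1 x1_nil _ _.
    by apply: (av x1 x2 Ew x1_nil x2_nil).
  subst x2; rewrite cats0 in Ew; subst x1.
  by left; split => //; rewrite Er'.
right; exists x1; rewrite Ex1 in e1; split => //.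
have x2_nil : x2 <> [::] by move=> x0; apply: r'q; rewrite Er' Ew x0 cats0.
have Sx2 : S (residual x2 q) by rewrite -Ex1 -residual_cat -Ew -Er'.
have [y1 [y2 [Ex2 e2]]] := reduct_shortest_edge Sq x2_nil Sx2.
have [Ey1 Ery1] := reduct_out_edge_uniq out_q e2; subst y1.
have Sr : S r by case: out_q.
case: (classic (y2 = [::])) => [y0|y_nil].
  by rewrite Er' Ew Ex2 y0 cats0 residual_cat Ex1 Ery1.
exfalso; apply: (av (x1 ++ v) y2) => //; first by rewrite Ew Ex2 catA.
  by case: (x1) e1 => [[]|].
rewrite residual_cat Ex1 Ery1; split => //.
exact: reduct_out_edge_noloop out_q.
Qed.

Lemma reduct_elem_reduction : elem_reduction R q v r R'.
Proof.
split; first exact: reduct_wf.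
split; first exact: reduct_det Sq.
split; first exact: reduct_trim.
split; first exact: Sq.
split; first exact: reduct_nonspecial.
split; first exact: out_q.
split; first by move=> p; apply: iff_refl.
split.
  move=> p w r'; split; first exact: reduct_edge_of_del_edge.
  case=> [[e [pq r'q]]|[u [e [-> ->]]]]; first exact: reduct_del_edge.
  exact: reduct_del_edge_cat.
split=> p; last exact: iff_refl.
rewrite /=; split=> [[[Sp _] Ep]|[Sp Ep]] //; do 2 split => //; move=> pq; apply: nsq.
by rewrite -pq Ep; apply: special_residual_self (S_residual Sq).
Qed.

End NonSpecial.
End Deletion.

Lemma reduct_reduces_special (T : eqType) (g : T -> lang A) (l : seq T) S :
  (forall K, special_residual L K -> S K) -> (forall K, S K -> is_residual_state L K) ->
  (forall K, S K -> special_residual L K \/ exists2 t, t \in l & K = g t) ->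
  reduces (reduct S) (reduct (special_residual L)).
Proof.
elim: l S => [|x l IH] S special_S S_residual cover.
  suff -> : S = special_residual L by apply: reduces_refl.
  by apply: pred_lang_ext => K; split=> [/cover [//|[]]|/special_S].
case: (classic (S (g x) /\ ~ special_residual L (g x))) => [[Sx nsx]|keep_x].
  have [v [r out_x]] := reduct_out_edge special_S S_residual Sx nsx.
  have red_x : elem_red (reduct S) (reduct (fun K => S K /\ K <> g x)).
    by exists (g x), v, r; apply: reduct_elem_reduction.
  apply: reduces_step red_x _.
  apply: IH => [K spK|K [/S_residual]//|K [SK Kx]].
    by split; [exact: special_S | move=> EK; apply: nsx; rewrite -EK].
  case: (cover K SK) => [|[t]]; first by left.
  rewrite in_cons => /orP [/eqP -> /Kx []|tl EK].
  by right; exists t.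
apply: IH => // K SK; case: (cover K SK) => [|[t]]; first by left.
rewrite in_cons => /orP [/eqP -> EK|tl EK]; last by right; exists t.
left; apply: NNPP => nsK; apply: keep_x.
by rewrite -EK.
Qed.

End Reduct.

Lemma cauto_iso_refl (A : finType) (S : Type) (X : cauto A S) : cauto_iso X X.
Proof. by exists id; do 5 (split; first by move=> *; eauto). Qed.

Theorem mainTheorem13 (A : finType) (L : lang A) :
  recognizable L ->
  exists B : cauto A (lang A),
    reduces (minDFA L) B /\ cauto_iso B (Ac L).
Proof.
case=> Q [d [q0 [F HL]]].
pose state_lang (s : Q) : lang A := fun v => F (foldl d s v).
exists (reduct L (special_residual L)).
split; last by rewrite Ac_reduct; apply: cauto_iso_refl.
rewrite minDFA_reduct; apply: (reduct_reduces_special (g := state_lang) (l := enum Q)).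
- exact: special_residual_state.
- by [].
- move=> K [[u ->] _]; right; exists (foldl d q0 u); first by rewrite mem_enum.
  by apply: functional_extensionality => v; rewrite /residual HL foldl_cat.
Qed.
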